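(* Let $\mathcal A\subset\mathcal H$ be a left coideal subalgebra satisfying the biannihilator condition and let $\mu\in\mathcal A'$ be a non-zero multiplicative functional. Then: (1) if $\tilde\Lambda\in L^{\mathcal A}_\mu$ is non-zero and non-degenerate (i.e. $\mathcal V_{\tilde\Lambda}=\mathcal A$) and $\mu(\tilde\Lambda)\neq0$, then $L^{\mathcal A}_\mu=R^{\mathcal A}_\mu=k\tilde\Lambda$; (2) if $L^{\mathcal A}_\mu=k\hat\Lambda$ for some $0\neq\hat\Lambda\in L^{\mathcal A}_\mu$, then $\hat\Lambda$ is non-degenerate, i.e. $\mathcal V_{\hat\Lambda}=\mathcal A$. In particular, if $\mathcal A$ is a Frobenius algebra, then every non-zero element of $L^{\mathcal A}_\mu$ is non-degenerate.
   Context: $k$ is a field; $\mathcal H$ is a Hopf algebra over $k$ with comultiplication $\Delta$, counit $\varepsilon$, invertible antipode $S$, dual $\mathcal H'$. A left coideal subalgebra is a subalgebra $\mathcal A\ni1$ with $\Delta(\mathcal A)\subset\mathcal H\otimes\mathcal A$. For $\Lambda\in\mathcal H$, $\mathcal V_\Lambda=\{(\nu\otimes\mathrm{id})\Delta(\Lambda):\nu\in\mathcal H'\}$. For a multiplicative functional $\mu$ (linear, $\mu(ab)=\mu(a)\mu(b)$): $L^{\mathcal A}_\mu=\{\Lambda\in\mathcal A: a\Lambda=\mu(a)\Lambda\ \forall a\}$, $R^{\mathcal A}_\mu=\{\Lambda\in\mathcal A:\Lambda a=\mu(a)\Lambda\ \forall a\}$. For a left ideal $I\subset\mathcal A$, $r(I)=\{a\in\mathcal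 A: ba=0\ \forall b\in I\}$; for a right ideal $I'$, $l(I')=\{a\in\mathcal A: ab=0\ \forall b\in I'\}$. $\mathcal A$ satisfies the biannihilator condition if $l(r(I))=I$ for every left ideal $I$ and $r(l(I'))=I'$ for every right ideal $I'$. A finite-dimensional unital algebra is Frobenius if it admits a non-degenerate bilinear form $\sigma$ with $\sigma(ab,c)=\sigma(a,bc)$. *)

(* Elements of H (x) H (resp. H (x) H (x) H) are encoded
   as finite formal sums seq (H * H) (resp. seq (H * H * H)); two formal sums
   denote the same tensor iff every bilinear (resp. trilinear) form k-valued
   takes the same value on them (over a field, tensors are separated by
   the dual of the tensor product). *)
From HB Require Import structures.
From mathcomp Require Import all_boot all_order all_algebra.
Set Implicit Arguments. Unset Strict Implicit. Unset Printing Implicit Defensive.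
Import GRing.Theory.
Local Open Scope ring_scope.

Section HopfDefs.
Variables (k : fieldType) (H : algType k).

Definition lin (f : H -> k) : Prop :=
  forall (c : k) (x y : H), f (c *: x + y) = c * f x + f y.

Definition bilin (f : H -> H -> k) : Prop :=
  (forall a, lin (f a)) /\ (forall b, lin (fun a => f a b)).

Definition trilin (f : H -> H -> H -> k) : Prop :=
  (forall a b, lin (f a b)) /\ (forall a c, lin (fun b => f a b c))
  /\ (forall b c, lin (fun a => f a b c)).

Definition teq2 (s t : seq (H * H)) : Prop :=
  forall f, bilin f ->
    \sum_(p <- s) f p.1 p.2 = \sum_(p <- t) f p.1 p.2.

Definition teq3 (s t : seq (H * H * H)) : Prop :=
  forall f, trilin f ->
    \sum_(p <- s) f p.1.1 p.1.2 p.2 = \sum_(p <- t) f p.1.1 p.1.2 p.2.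

Definition tscale (c : k) (s : seq (H * H)) : seq (H * H) :=
  [seq (c *: p.1, p.2) | p <- s].

Definition tmul (s t : seq (H * H)) : seq (H * H) :=
  [seq (p.1 * q.1, p.2 * q.2) | p <- s, q <- t].

Definition DxI (D : H -> seq (H * H)) (s : seq (H * H)) : seq (H * H * H) :=
  [seq (q.1, q.2, p.2) | p <- s, q <- D p.1].
Definition IxD (D : H -> seq (H * H)) (s : seq (H * H)) : seq (H * H * H) :=
  [seq (p.1, q.1, q.2) | p <- s, q <- D p.2].

Definition is_hopf (D : H -> seq (H * H)) (e : H -> k) (S : H -> H) : Prop :=
  [/\ (forall c x y, teq2 (D (c *: x + y)) (tscale c (D x) ++ D y)),
      teq2 (D 1) [:: (1, 1)],
      (forall x y, teq2 (D (x * y)) (tmul (D x) (D y))),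
      (forall x, teq3 (DxI D (D x)) (IxD D (D x))) &
   [/\ lin e, e 1 = 1, (forall x y, e (x * y) = e x * e y),
      (forall x, \sum_(p <- D x) e p.1 *: p.2 = x) &
      (forall x, \sum_(p <- D x) e p.2 *: p.1 = x)]] /\
  [/\ (forall c x y, S (c *: x + y) = c *: S x + S y),
      (forall x, \sum_(p <- D x) S p.1 * p.2 = (e x)%:A),
      (forall x, \sum_(p <- D x) p.1 * S p.2 = (e x)%:A) &
      bijective S].

Definition subalg (A : H -> Prop) : Prop :=
  [/\ A 1, (forall x y, A x -> A y -> A (x + y)),
      (forall (c : k) x, A x -> A (c *: x)) &
      (forall x y, A x -> A y -> A (x * y))].

Definition left_coideal_subalg (D : H -> seq (H * H)) (A : H -> Prop) : Prop :=
  subalg A /\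
  (forall a, A a -> exists s : seq (H * H),
      teq2 (D a) s /\ (forall p, p \in s -> A p.2)).

Definition slice (nu : H -> k) (s : seq (H * H)) : H :=
  \sum_(p <- s) nu p.1 *: p.2.

Definition VLam (D : H -> seq (H * H)) (Lam : H) : H -> Prop :=
  fun x => exists nu, lin nu /\ x = slice nu (D Lam).

Definition nondeg (D : H -> seq (H * H)) (A : H -> Prop) (Lam : H) : Prop :=
  forall x, VLam D Lam x <-> A x.

(* mu in A' multiplicative (mu is given on H but only its values on A matter) *)
Definition mult_fun (A : H -> Prop) (mu : H -> k) : Prop :=
  (forall c x y, A x -> A y -> mu (c *: x + y) = c * mu x + mu y) /\
  (forall x y, A x -> A y -> mu (x * y) = mu x * mu y).

Definition Lmu (A : H -> Prop) (mu : H -> k) : H -> Prop :=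
  fun L => A L /\ forall a, A a -> a * L = mu a *: L.
Definition Rmu (A : H -> Prop) (mu : H -> k) : H -> Prop :=
  fun L => A L /\ forall a, A a -> L * a = mu a *: L.

Definition left_ideal (A I : H -> Prop) : Prop :=
  [/\ (forall x, I x -> A x), I 0, (forall x y, I x -> I y -> I (x - y)) &
      (forall a x, A a -> I x -> I (a * x))].
Definition right_ideal (A I : H -> Prop) : Prop :=
  [/\ (forall x, I x -> A x), I 0, (forall x y, I x -> I y -> I (x - y)) &
      (forall a x, A a -> I x -> I (x * a))].

Definition rann (A I : H -> Prop) : H -> Prop :=
  fun a => A a /\ forall b, I b -> b * a = 0.
Definition lann (A I : H -> Prop) : H -> Prop :=
  fun a => A a /\ forall b, I b -> a * b = 0.

Definition biannihilator (A : H -> Prop) : Prop :=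
  (forall I, left_ideal A I -> forall x, lann A (rann A I) x <-> I x) /\
  (forall I, right_ideal A I -> forall x, rann A (lann A I) x <-> I x).

Definition frobenius (A : H -> Prop) : Prop :=
  (exists s : seq H, (forall x, x \in s -> A x) /\
     forall a, A a -> exists cs : seq k,
       a = \sum_(i < size s) cs`_i *: s`_i) /\
  exists sigma : H -> H -> k,
    [/\ (forall a, A a -> forall c x y, A x -> A y ->
           sigma a (c *: x + y) = c * sigma a x + sigma a y),
        (forall b, A b -> forall c x y, A x -> A y ->
           sigma (c *: x + y) b = c * sigma x b + sigma y b),
        (forall a b c, A a -> A b -> A c -> sigma (a * b) c = sigma a (b * c)),
        (forall a, A a -> (forall c, A c -> sigma a c = 0) -> a = 0) &
        (forall c, A c -> (forall a, A a -> sigma a c = 0) -> c = 0)].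

End HopfDefs.

(* Part (1) is pure algebra in A: if Lt is a left mu-eigenvector with
   mu Lt <> 0, then a left eigenvector z with mu z = 0 would give
   Lt in r(l(zA)) = zA, hence mu Lt = 0; so L_mu = k Lt, and the same
   argument applied to Lt a shows Lt, hence all of k Lt = R_mu, is also a
   right eigenvector.

   Parts (2) and (3) follow from a stronger fact: under the biannihilator
   condition EVERY non-zero L in L_mu is non-degenerate.  Indeed
   V_L = {(nu (x) id)Delta(L)} is a left ideal of A (using Delta(A) in
   H (x) A and a L = mu(a) L), and its right annihilator is 0: if V_L x = 0
   then L_(1) (x) L_(2) x = 0, and applying u (x) w |-> u_(1) (x) S(u_(2)) w
   gives L (x) x = 0.  Hence V_L = l(r(V_L)) = l(0) = A. *)

From HB Require Import structures.
From mathcomp Require Import all_boot all_order all_algebra.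
From mathcomp Require Import boolp classical_sets.
Set Implicit Arguments. Unset Strict Implicit. Unset Printing Implicit Defensive.
Import GRing.Theory.
Local Open Scope ring_scope.

Section LinearFunctionals.
Variables (k : fieldType) (H : algType k).
Implicit Types (f : H -> k) (x y : H).

Lemma lin0 f : lin f -> f 0 = 0.
Proof.
move=> hf; have := hf 1 0 0; rewrite scale1r addr0 mul1r => e.
by apply: (@addrI _ (f 0)); rewrite addr0 -e.
Qed.

Lemma linD f x y : lin f -> f (x + y) = f x + f y.
Proof. by move=> hf; rewrite -[x in LHS]scale1r hf mul1r. Qed.

Lemma linZ f c x : lin f -> f (c *: x) = c * f x.
Proof. by move=> hf; rewrite -[c *: x]addr0 hf lin0 // addr0. Qed.

Lemma linN f x : lin f -> f (- x) = - f x.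
Proof. by move=> hf; rewrite -scaleN1r linZ // mulN1r. Qed.

Lemma linB f x y : lin f -> f (x - y) = f x - f y.
Proof. by move=> hf; rewrite linD // linN. Qed.

Lemma lin_sum f I (r : seq I) (F : I -> H) : lin f ->
  f (\sum_(i <- r) F i) = \sum_(i <- r) f (F i).
Proof.
move=> hf; elim: r => [|i r IH]; first by rewrite !big_nil lin0.
by rewrite !big_cons linD // IH.
Qed.

Definition lin_map (g : H -> H) : Prop :=
  forall (c : k) x y, g (c *: x + y) = c *: g x + g y.

Lemma lin_comp f g : lin f -> lin_map g -> lin (fun x => f (g x)).
Proof. by move=> hf hg c x y; rewrite hg hf. Qed.

Lemma lin_map_mulr y : lin_map (fun x => x * y).
Proof. by move=> c x z; rewrite mulrDl scalerAl. Qed.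

Lemma lin_map_mull y : lin_map (fun x => y * x).
Proof. by move=> c x z; rewrite mulrDr scalerAr. Qed.

Lemma lin_map_comp g1 g2 :
  lin_map g1 -> lin_map g2 -> lin_map (fun x => g1 (g2 x)).
Proof. by move=> h1 h2 c x y; rewrite h2 h1. Qed.

Lemma lin_zero : lin (fun _ : H => 0 : k).
Proof. by move=> c x y; rewrite mulr0 addr0. Qed.

Lemma lin_mull f (c : k) : lin f -> lin (fun x => c * f x).
Proof. by move=> hf a x y; rewrite hf mulrDr mulrCA. Qed.

Lemma lin_mulr f (c : k) : lin f -> lin (fun x => f x * c).
Proof. by move=> hf a x y; rewrite hf mulrDl mulrA. Qed.

Lemma lin_sub f g : lin f -> lin g -> lin (fun x => f x - g x).
Proof. by move=> hf hg a x y; rewrite hf hg mulrBr opprD addrACA. Qed.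

Lemma lin_sumf I (r : seq I) (F : I -> H -> k) : (forall i, lin (F i)) ->
  lin (fun x => \sum_(i <- r) F i x).
Proof.
move=> hF a x y; rewrite mulr_sumr -big_split; apply: eq_bigr => i _.
exact: hF.
Qed.

Lemma bilin_prod f g : lin f -> lin g -> bilin (fun x y => f x * g y).
Proof. by move=> hf hg; split => ?; [apply: lin_mull | apply: lin_mulr]. Qed.

Definition bilin_map (m : H -> H -> H) : Prop :=
  (forall x, lin_map (m x)) /\ (forall y, lin_map (fun x => m x y)).

(* Substituting a bilinear map into one slot of a bilinear form gives a
   trilinear form; this is how coassociativity is applied. *)
Lemma trilin_inner_r (B : H -> H -> k) m : bilin B -> bilin_map m ->
  trilin (fun x y z => B x (m y z)).
Proof.
move=> [B1 B2] [m1 m2]; split; last split.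
- by move=> x y; apply: lin_comp.
- by move=> x z; apply: lin_comp.
- by move=> y z; apply: B2.
Qed.

Lemma trilin_inner_l (B : H -> H -> k) m : bilin B -> bilin_map m ->
  trilin (fun x y z => B (m x y) z).
Proof.
move=> [B1 B2] [m1 m2]; split; last split.
- by move=> x y; apply: B1.
- by move=> x z; apply: (lin_comp (B2 z)).
- by move=> y z; apply: (lin_comp (B2 z)).
Qed.

End LinearFunctionals.

Section Separation.
Variables (k : fieldType) (H : algType k) (v : H).
Hypothesis v_neq0 : v != 0.

(* A partial functional normalised at v: a subspace P of H containing v and
   a map f, linear on P, with f v = 1.  Zorn's lemma yields a total one. *)
Definition normalised_partial (t : (H -> Prop) * (H -> k)) : Prop :=
  [/\ t.1 v, t.2 v = 1,
      (forall c x y, t.1 x -> t.1 y -> t.1 (c *: x + y)) &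
      (forall c x y, t.1 x -> t.1 y -> t.2 (c *: x + y) = c * t.2 x + t.2 y)].

Definition pfun := {t | normalised_partial t}.

Definition extends (s t : pfun) : bool :=
  `[< forall x, (sval s).1 x -> (sval t).1 x /\ (sval t).2 x = (sval s).2 x >].

Lemma pfun_dom0 t : normalised_partial t -> t.1 0.
Proof.
case=> tv _ tlin _; have := tlin (-1) v v tv tv.
by rewrite scaleN1r addNr.
Qed.

Definition line_coord (x : H) : k :=
  match pselect (exists c, x = c *: v) with
  | left h => sval (cid h) | right _ => 0 end.

Lemma line_coordE c : line_coord (c *: v) = c.
Proof.
rewrite /line_coord; case: pselect => [h|[]]; last by exists c.
case: (cid h) => d /= /eqP; rewrite -subr_eq0 -scalerBl scaler_eq0.
by rewrite (negbTE v_neq0) orbF subr_eq0 => /eqP.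
Qed.

Lemma line_partial :
  normalised_partial ((fun x => exists c, x = c *: v), line_coord).
Proof.
split => /=.
- by exists 1; rewrite scale1r.
- by rewrite -[v]scale1r line_coordE.
- by move=> c x y [a ->] [b ->]; exists (c * a + b); rewrite scalerDl scalerA.
- by move=> c x y [a ->] [b ->]; rewrite scalerA -scalerDl !line_coordE.
Qed.

(* Every chain of partial functionals has an upper bound: its union. *)
Lemma pfun_chain_ub (C : set pfun) : total_on C extends ->
  exists t, forall s, C s -> extends s t.
Proof.
move=> totC; have [[t1 Ct1]|noC] := pselect (exists t, C t); last first.
  by exists (exist _ _ line_partial) => s Cs; case: noC; exists s.
pose P x := exists t, C t /\ (sval t).1 x.
pose f x := match pselect (P x) with
   | left h => (sval (sval (cid h))).2 x | right _ => 0 end.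
have fE t x : C t -> (sval t).1 x -> f x = (sval t).2 x.
  move=> Ct tx; rewrite /f; case: pselect => [h|[]]; last by exists t.
  case: (cid h) => t' [Ct' t'x] /=.
  have [/asboolP le|/asboolP le] := totC _ _ Ct Ct'; first by case: (le _ tx).
  by case: (le _ t'x) => _ ->.
have common x y : P x -> P y -> exists t, [/\ C t, (sval t).1 x & (sval t).1 y].
  move=> [t [Ct tx]] [t' [Ct' t'y]].
  have [/asboolP le|/asboolP le] := totC _ _ Ct Ct'.
    by exists t'; split => //; case: (le _ tx).
  by exists t; split => //; case: (le _ t'y).
have union : normalised_partial (P, f).
  split => /=.
  - by exists t1; split => //; case: (svalP t1).
  - by rewrite (fE t1) //; case: (svalP t1).
  - move=> c x y Px Py; have [t [Ct tx ty]] := common _ _ Px Py.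
    by exists t; split => //; case: (svalP t) => _ _ tsub _; apply: tsub.
  - move=> c x y Px Py; have [t [Ct tx ty]] := common _ _ Px Py.
    case: (svalP t) => _ _ tsub tlin.
    by rewrite !(fE t) //; [apply: tlin | apply: tsub].
exists (exist _ _ union) => s Cs; apply/asboolP => x sx /=.
by split; [exists s | rewrite (fE s)].
Qed.

(* Modulo a subspace P not containing w, the decomposition p + c w with
   p in P is unique; this makes the one-step extension well defined. *)
Lemma decomp_uniq (P : H -> Prop) w p q (c d : k) :
  (forall c x y, P x -> P y -> P (c *: x + y)) -> P 0 -> ~ P w ->
  P p -> P q -> p + c *: w = q + d *: w -> p = q.
Proof.
move=> Psub P0 Pw Pp Pq pq; have [cd|cd] := eqVneq c d.
  by move: pq; rewrite cd => /addIr.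
case: Pw; have -> : w = (c - d)^-1 *: (q - p) + 0.
  rewrite addr0; apply: (@scalerI _ _ (c - d)); first by rewrite subr_eq0.
  rewrite scalerA divff ?subr_eq0 // scale1r scalerBl.
  have -> : c *: w = q + d *: w - p by rewrite -pq [p + _]addrC addrK.
  by rewrite addrAC addrK.
apply: (Psub) => //; rewrite -[q - p]addrC -scaleN1r; exact: (Psub).
Qed.

Lemma pfun_extend (t : pfun) w : ~ (sval t).1 w ->
  exists t' : pfun, extends t t' /\ (sval t').1 w.
Proof.
case: t => [[P f] tP] /= Pw; have [Pv fv Psub flin] := tP.
have P0 := pfun_dom0 tP.
pose P' x := exists pc : H * k, P pc.1 /\ x = pc.1 + pc.2 *: w.
pose f' x := match pselect (P' x) with
   | left h => f (sval (cid h)).1 | right _ => 0 end.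
have f'E p c : P p -> f' (p + c *: w) = f p.
  move=> Pp; rewrite /f'; case: pselect => [h|[]]; last by exists (p, c).
  case: (cid h) => [[q d]] /= [Pq pq].
  by rewrite (decomp_uniq Psub P0 Pw Pq Pp (esym pq)).
have ext : normalised_partial (P', f').
  split => /=.
  - by exists (v, 0); rewrite scale0r addr0.
  - by rewrite -[v]addr0 -(scale0r w) f'E.
  - move=> c x y [[p a] [/= Pp ->]] [[q b] [/= Pq ->]].
    exists (c *: p + q, c * a + b); split; first exact: (Psub).
    by rewrite /= scalerDr scalerDl scalerA addrACA.
  - move=> c x y [[p a] [/= Pp ->]] [[q b] [/= Pq ->]].
    rewrite scalerDr scalerA addrACA -scalerDl !f'E //; first exact: (flin).
    exact: (Psub).
exists (exist _ _ ext); split.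
  apply/asboolP => x /= Px; split.
    by exists (x, 0); rewrite /= scale0r addr0.
  by rewrite -[x in f' x]addr0 -(scale0r w) f'E.
by exists (0, 1); split; rewrite //= add0r scale1r.
Qed.

Lemma separating_functional : exists f : H -> k, lin f /\ f v = 1.
Proof.
have [||C totC|m m_max] := @ZL_preorder pfun (exist _ _ line_partial) extends.
- by move=> t; apply/asboolP.
- move=> r s t /asboolP rs /asboolP st.
  by apply/asboolP => x /rs [/st [tx ->] ->].
- exact: pfun_chain_ub.
have total w : (sval m).1 w.
  apply: contrapT => mw; have [t [mt tw]] := pfun_extend mw.
  by have /asboolP tm := m_max _ mt; case: (tm _ tw).
case: m total {m_max} => [[P f] [_ fv _ flin]] /= total.
by exists f; split => // c x y; apply: flin.
Qed.

End Separation.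

Section FunctionalExtensionality.
Variables (k : fieldType) (H : algType k).

Lemma functional_ext (x y : H) :
  (forall f : H -> k, lin f -> f x = f y) -> x = y.
Proof.
move=> fxy; apply/eqP; rewrite -subr_eq0; apply: contraT.
move=> /separating_functional [f [hf]].
by rewrite linB // fxy // subrr => /eqP; rewrite eq_sym oner_eq0.
Qed.

End FunctionalExtensionality.

Section Tensors.
Variables (k : fieldType) (H : algType k).
Implicit Types (s : seq (H * H)) (nu psi : H -> k).

Lemma slice_eq nu s t : lin nu -> teq2 s t -> slice nu s = slice nu t.
Proof.
move=> hnu st; apply: functional_ext => psi hpsi; rewrite /slice !lin_sum //.
have /= e := st _ (bilin_prod hnu hpsi).
transitivity (\sum_(p <- s) nu p.1 * psi p.2).
  by apply: eq_bigr => p _; rewrite linZ.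
by rewrite e; apply: eq_bigr => p _; rewrite linZ.
Qed.

Lemma tensor_eliminate psi a b s (f : H -> H -> k) :
  lin psi -> psi b = 1 -> bilin f -> a = - \sum_(p <- s) psi p.2 *: p.1 ->
  \sum_(p <- (a, b) :: s) f p.1 p.2 =
  \sum_(p <- [seq (p.1, p.2 - psi p.2 *: b) | p <- s]) f p.1 p.2.
Proof.
move=> hpsi psib [f1 f2] ->; rewrite big_cons big_map /=.
rewrite (linN _ (f2 b)) (lin_sum _ _ (f2 b)).
under [RHS]eq_bigr do rewrite (linB _ _ (f1 _)) (linZ _ _ (f1 _)).
rewrite sumrB addrC; congr (_ - _).
by apply: eq_bigr => p _; rewrite (linZ _ _ (f2 b)).
Qed.

Lemma tensor_zero_rank_one s :
  (forall nu psi, lin nu -> lin psi -> \sum_(p <- s) nu p.1 * psi p.2 = 0) ->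
  forall f, bilin f -> \sum_(p <- s) f p.1 p.2 = 0.
Proof.
have [n] := ubnP (size s); elim: n s => // n IH [|[a b] s] /= sz hs f hf.
  by rewrite big_nil.
have [f1 f2] := hf.
have [b0|b0] := eqVneq b 0.
  rewrite big_cons b0 (lin0 (f1 a)) add0r; apply: IH => // nu psi hnu hpsi.
  by have := hs nu psi hnu hpsi; rewrite big_cons /= b0 (lin0 hpsi) mulr0 add0r.
have [psi [hpsi psib]] := separating_functional b0.
have a_def : a = - \sum_(p <- s) psi p.2 *: p.1.
  apply: functional_ext => nu hnu; rewrite linN // lin_sum //.
  have := hs nu psi hnu hpsi; rewrite big_cons /= psib mulr1.
  move=> /eqP; rewrite addr_eq0 => /eqP ->.
  by congr (- _); apply: eq_bigr => p _; rewrite linZ // mulrC.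
rewrite (tensor_eliminate hpsi psib hf a_def).
apply: IH => //; first by rewrite size_map.
move=> nu chi hnu hchi.
have /= <- := tensor_eliminate hpsi psib (bilin_prod hnu hchi) a_def.
exact: hs.
Qed.

Lemma tensor_zero s : (forall nu, lin nu -> slice nu s = 0) ->
  forall f, bilin f -> \sum_(p <- s) f p.1 p.2 = 0.
Proof.
move=> hs; apply: tensor_zero_rank_one => nu psi hnu hpsi.
have := f_equal psi (hs nu hnu); rewrite /slice lin_sum // lin0 // => e.
by rewrite -[RHS]e; apply: eq_bigr => p _; rewrite linZ.
Qed.

End Tensors.

Section Subalgebra.
Variables (k : fieldType) (H : algType k) (A : H -> Prop).
Hypothesis hA : subalg A.

Lemma subalg1 : A 1. Proof. by case: hA. Qed.
Lemma subalgD x y : A x -> A y -> A (x + y).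
Proof. by case: hA => _ h _ _; apply: h. Qed.
Lemma subalgZ (c : k) x : A x -> A (c *: x).
Proof. by case: hA => _ _ h _; apply: h. Qed.
Lemma subalgM x y : A x -> A y -> A (x * y).
Proof. by case: hA => _ _ _ h; apply: h. Qed.
Lemma subalg0 : A 0.
Proof. by rewrite -(scale0r 1); apply: subalgZ; exact: subalg1. Qed.

Lemma subalgB x y : A x -> A y -> A (x - y).
Proof.
by move=> Ax Ay; rewrite -scaleN1r addrC; apply: subalgD => //; exact: subalgZ.
Qed.

Lemma subalg_sum (I : eqType) (r : seq I) (g : I -> H) :
  (forall i, i \in r -> A (g i)) -> A (\sum_(i <- r) g i).
Proof.
elim: r => [|i r IH] Ag; first by rewrite big_nil; exact: subalg0.
rewrite big_cons; apply: subalgD; first by apply: Ag; rewrite mem_head.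
by apply: IH => j rj; apply: Ag; rewrite in_cons rj orbT.
Qed.

End Subalgebra.

Section HopfAlgebra.
Variables (k : fieldType) (H : algType k).
Variables (D : H -> seq (H * H)) (e : H -> k) (S : H -> H).
Hypothesis hH : is_hopf D e S.
Implicit Types (B : H -> H -> k) (a x y : H).

Lemma coprodD c x y : teq2 (D (c *: x + y)) (tscale c (D x) ++ D y).
Proof. by case: hH => [[h]]. Qed.

Lemma coprodM x y : teq2 (D (x * y)) (tmul (D x) (D y)).
Proof. by case: hH => [[_ _ h]]. Qed.

Lemma coassoc_teq x : teq3 (DxI D (D x)) (IxD D (D x)).
Proof. by case: hH => [[_ _ _ h]]. Qed.

Lemma counitL x : \sum_(p <- D x) e p.1 *: p.2 = x.
Proof. by case: hH => [[_ _ _ _ [_ _ _ h _]] _]. Qed.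

Lemma counitR x : \sum_(p <- D x) e p.2 *: p.1 = x.
Proof. by case: hH => [[_ _ _ _ [_ _ _ _ h]] _]. Qed.

Lemma antipode_lin : lin_map S.
Proof. by case: hH => [_ [h _ _ _]]. Qed.

Lemma antipodeL x : \sum_(p <- D x) S p.1 * p.2 = (e x)%:A.
Proof. by case: hH => [_ [_ h _ _]]. Qed.

Lemma bilin_map_antipode : bilin_map (fun u v => S u * v).
Proof.
split => [u|v]; first exact: lin_map_mull.
exact: lin_map_comp (lin_map_mulr v) antipode_lin.
Qed.

Lemma coprod_form_lin B : bilin B -> lin (fun x => \sum_(p <- D x) B p.1 p.2).
Proof.
move=> hB c x y; rewrite (coprodD c x y hB) big_cat big_map /= mulr_sumr.
congr (_ + _); apply: eq_bigr => p _; case: hB => _ B2.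
exact: (linZ c p.1 (B2 p.2)).
Qed.

Lemma coassoc (K : H -> H -> H -> k) x : trilin K ->
  \sum_(p <- D x) \sum_(q <- D p.1) K q.1 q.2 p.2 =
  \sum_(p <- D x) \sum_(q <- D p.2) K p.1 q.1 q.2.
Proof.
move=> hK; have := coassoc_teq x hK.
by rewrite /DxI /IxD !big_allpairs_dep.
Qed.

Lemma coprod_eigen B b L c : bilin B -> b * L = c *: L ->
  \sum_(r <- D b) \sum_(p <- D L) B (r.1 * p.1) (r.2 * p.2) =
  c * \sum_(p <- D L) B p.1 p.2.
Proof.
move=> hB bL; rewrite -(linZ c L (coprod_form_lin hB)) /= -bL.
by rewrite (coprodM b L hB) /tmul big_allpairs_dep.
Qed.

Lemma antipode_cancelR B a : bilin B ->
  \sum_(p <- D a) \sum_(q <- D p.1) B q.1 (S q.2 * p.2) = B a 1.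
Proof.
move=> hB; have [B1 B2] := hB.
rewrite (coassoc _ (trilin_inner_r hB bilin_map_antipode)) /=.
under eq_bigr do rewrite -(lin_sum _ _ (B1 _)) antipodeL (linZ _ _ (B1 _)).
rewrite -[in RHS](counitR a) (lin_sum _ _ (B2 1)).
by apply: eq_bigr => p _; rewrite (linZ _ _ (B2 1)).
Qed.

Lemma antipode_cancelL B a : bilin B ->
  \sum_(p <- D a) \sum_(q <- D p.2) B (S p.1 * q.1) q.2 = B 1 a.
Proof.
move=> hB; have [B1 B2] := hB.
rewrite -(coassoc _ (trilin_inner_l hB bilin_map_antipode)) /=.
under eq_bigr do rewrite -(lin_sum _ _ (B2 _)) antipodeL (linZ _ _ (B2 _)).
rewrite -[in RHS](counitL a) (lin_sum _ _ (B1 1)).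
by apply: eq_bigr => p _; rewrite (linZ _ _ (B1 1)).
Qed.

(* The bilinear form u (x) w |-> B(S(u) w_(1), w_(2)), used to transport
   S(a_(1)) a_(2) (x) a_(3) along equalities of tensors a_(1) (x) a_(2). *)
Lemma bilin_coprod_antipode B :
  bilin B -> bilin (fun u w => \sum_(r <- D w) B (S u * r.1) r.2).
Proof.
move=> [B1 B2]; split => [u|w].
  apply: (coprod_form_lin (B := fun y z => B (S u * y) z)).
  split => [y|z]; first exact: B1.
  exact: lin_comp (B2 z) (lin_map_mull (S u)).
apply: lin_sumf => r.
exact: lin_comp (B2 r.2) (lin_map_comp (lin_map_mulr r.1) antipode_lin).
Qed.

(* V_L has trivial right annihilator when L != 0: if V_L x = 0 then the
   tensor L_(1) (x) L_(2) x vanishes, and applying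
   u (x) w |-> u_(1) (x) S(u_(2)) w to it yields L (x) x = 0. *)
Lemma VLam_rann0 (L x : H) :
  L != 0 -> (forall b, VLam D L b -> b * x = 0) -> x = 0.
Proof.
move=> L0 Vx.
pose t := [seq (p.1, p.2 * x) | p <- D L].
have t0 nu : lin nu -> slice nu t = 0.
  move=> hnu; rewrite -(Vx (slice nu (D L))); last by exists nu.
  by rewrite /slice big_map mulr_suml; apply: eq_bigr => p _; rewrite scalerAl.
have prod0 phi psi : lin phi -> lin psi -> phi L * psi x = 0.
  move=> hphi hpsi; pose B u w := phi u * psi (w * x).
  have hB : bilin B := bilin_prod hphi (lin_comp hpsi (lin_map_mulr x)).
  pose F u w := \sum_(q <- D u) phi q.1 * psi (S q.2 * w).
  have hF : bilin F.
    split => [u|w].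
      by apply: lin_sumf => q; exact: lin_mull (lin_comp hpsi (lin_map_mull _)).
    apply: (coprod_form_lin (B := fun y z => phi y * psi (S z * w))).
    apply: bilin_prod hphi _.
    exact: lin_comp hpsi (lin_map_comp (lin_map_mulr w) antipode_lin).
  have -> : phi L * psi x = B L 1 by rewrite /B mul1r.
  rewrite -(antipode_cancelR L hB).
  transitivity (\sum_(p <- t) F p.1 p.2); last exact (tensor_zero t0 hF).
  rewrite big_map; apply: eq_bigr => p _.
  by apply: eq_bigr => q _; rewrite /B mulrA.
have [phi [hphi phiL]] := separating_functional L0.
apply: functional_ext => psi hpsi; rewrite lin0 //.
by rewrite -[LHS]mul1r -phiL; apply: prod0.
Qed.

Section CoidealSubalgebra.
Variables (A : H -> Prop) (mu : H -> k).
Hypothesis hA : left_coideal_subalg D A.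

Let hsub : subalg A := proj1 hA.

(* For L in A, V_L lies in A, because Delta(L) lies in H (x) A. *)
Lemma VLam_sub L x : A L -> VLam D L x -> A x.
Proof.
move=> AL [nu [hnu ->]]; have [s [DLs sA]] := proj2 hA L AL.
rewrite (slice_eq hnu DLs) /slice; apply: (subalg_sum hsub) => p sp.
by apply: (subalgZ hsub); apply: sA.
Qed.

(* For L in L_mu, V_L is stable under left multiplication by A:
   a (nu (x) id)Delta(L) = (nu' (x) id)Delta(L) with
   nu'(h) = mu(a_(2)) nu(S(a_(1)) h), since
   a L_(1) (x) L_(2) = S(a_(1)) a_(2) L_(1) (x) a_(3) L_(2)
   and a_(2) L = mu(a_(2)) L. *)
Lemma VLam_mull L a nu : Lmu A mu L -> A a -> lin nu ->
  VLam D L (a * slice nu (D L)).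
Proof.
move=> [AL Leig] Aa hnu; have [s [Das sA]] := proj2 hA a Aa.
pose nu' h := \sum_(q <- s) mu q.2 * nu (S q.1 * h).
have hnu' : lin nu'.
  by apply: lin_sumf => q; exact: lin_mull (lin_comp hnu (lin_map_mull _)).
exists nu'; split => //; apply: functional_ext => psi hpsi.
pose Bp (p : H * H) u w := nu (u * p.1) * psi (w * p.2).
have hBp p : bilin (Bp p).
  exact: bilin_prod (lin_comp hnu (lin_map_mulr _))
                    (lin_comp hpsi (lin_map_mulr _)).
transitivity (\sum_(p <- D L) Bp p 1 a).
  rewrite /slice mulr_sumr lin_sum //; apply: eq_bigr => p _.
  by rewrite -scalerAr linZ // /Bp mul1r.
(* write a as S(a_(1)) a_(2) (x) a_(3), with Delta(a) represented by s *)
transitivity (\sum_(p <- D L) \sum_(q <- s) \sum_(r <- D q.2)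
                Bp p (S q.1 * r.1) r.2).
  apply: eq_bigr => p _; rewrite -(antipode_cancelL a (hBp p)).
  exact: Das (bilin_coprod_antipode (hBp p)).
(* absorb a_(2) into L using a_(2) L = mu(a_(2)) L, as a_(2) lies in A *)
transitivity (\sum_(q <- s) mu q.2 *
                \sum_(p <- D L) nu (S q.1 * p.1) * psi p.2).
  rewrite exchange_big; apply: eq_big_seq => q /sA Aq2; rewrite exchange_big /=.
  have hBq : bilin (fun u w => nu (S q.1 * u) * psi w).
    exact: bilin_prod (lin_comp hnu (lin_map_mull _)) hpsi.
  rewrite -(coprod_eigen hBq (Leig _ Aq2)).
  by apply: eq_bigr => r _; apply: eq_bigr => p _; rewrite /Bp /= mulrA.
under [LHS]eq_bigr do rewrite mulr_sumr.
rewrite exchange_big /slice lin_sum //; apply: eq_bigr => p _.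
by rewrite linZ // /nu' mulr_suml; apply: eq_bigr => q _; rewrite mulrA.
Qed.

Lemma VLam_left_ideal L : Lmu A mu L -> left_ideal A (VLam D L).
Proof.
move=> LL; have AL := proj1 LL; split.
- by move=> x; apply: VLam_sub.
- exists (fun _ => 0); split; first exact: lin_zero.
  by rewrite /slice big1 // => p _; rewrite scale0r.
- move=> _ _ [nu [hnu ->]] [nu' [hnu' ->]].
  exists (fun h => nu h - nu' h); split; first exact: lin_sub.
  by rewrite /slice -sumrB; apply: eq_bigr => p _; rewrite scalerBl.
- by move=> a _ Aa [nu [hnu ->]]; apply: VLam_mull.
Qed.

(* Main point: when left ideals of A are left annihilators of their right
   annihilators, every non-zero L in L_mu is non-degenerate, because
   V_L = l(r(V_L)) and r(V_L) = 0 (VLam_rann0). *)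
Lemma Lmu_nondeg L :
  (forall I, left_ideal A I -> forall x, lann A (rann A I) x <-> I x) ->
  Lmu A mu L -> L != 0 -> nondeg D A L.
Proof.
move=> biann LL L0 x; split; first by apply: VLam_sub; case: LL.
move=> Ax; apply/(biann _ (VLam_left_ideal LL)); split => // b [_ rb].
by rewrite (VLam_rann0 L0 rb) mulr0.
Qed.

End CoidealSubalgebra.
End HopfAlgebra.

Section EigenvectorUniqueness.
Variables (k : fieldType) (H : algType k) (A : H -> Prop) (mu : H -> k).
Hypothesis hA : subalg A.
Hypothesis hmu : mult_fun A mu.

Lemma mult_funM x y : A x -> A y -> mu (x * y) = mu x * mu y.
Proof. by case: hmu => _ h; apply: h. Qed.

Lemma mult_fun0 : mu 0 = 0.
Proof.
have A0 := subalg0 hA; have := (proj1 hmu) 1 0 0 A0 A0.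
rewrite scale1r addr0 mul1r => e0.
by apply: (@addrI _ (mu 0)); rewrite addr0 -e0.
Qed.

Lemma mult_funZ c x : A x -> mu (c *: x) = c * mu x.
Proof.
move=> Ax; rewrite -[c *: x]addr0 (proj1 hmu) //; last exact: subalg0.
by rewrite mult_fun0 addr0.
Qed.

Lemma mult_funB x y : A x -> A y -> mu (x - y) = mu x - mu y.
Proof.
by move=> Ax Ay; rewrite addrC -scaleN1r (proj1 hmu) // mulN1r addrC.
Qed.

Lemma Lmu_scale L c : Lmu A mu L -> Lmu A mu (c *: L).
Proof.
move=> [AL LL]; split; first exact: subalgZ.
by move=> a Aa; rewrite -scalerAr LL // !scalerA mulrC.
Qed.

Lemma Rmu_scale L c : Rmu A mu L -> Rmu A mu (c *: L).
Proof.
move=> [AL LR]; split; first exact: subalgZ.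
by move=> a Aa; rewrite -scalerAl LR // !scalerA mulrC.
Qed.

Section NonDegenerateMu.
Hypothesis rbiann :
  forall I, right_ideal A I -> forall x, rann A (lann A I) x <-> I x.
Variable Lt : H.
Hypothesis LLt : Lmu A mu Lt.
Hypothesis muLt : mu Lt != 0.

(* A left eigenvector z with mu z = 0 vanishes: otherwise Lt lies in
   r(l(zA)) = zA, forcing mu Lt = mu z mu b = 0. *)
Lemma Lmu_mu0 z : Lmu A mu z -> mu z = 0 -> z = 0.
Proof.
move=> [Az zL] muz; apply: contrapT => /eqP z0.
pose I y := exists b, A b /\ y = z * b.
have rideal : right_ideal A I.
  split.
  - by move=> _ [b [Ab ->]]; apply: subalgM.
  - by exists 0; split; [exact: subalg0 | rewrite mulr0].
  - move=> _ _ [b [Ab ->]] [b' [Ab' ->]].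
    by exists (b - b'); split; [exact: subalgB | rewrite mulrBr].
  - move=> a _ Aa [b [Ab ->]].
    by exists (b * a); split; [exact: subalgM | rewrite mulrA].
have [b [Ab Ltzb]] : I Lt.
  apply/(rbiann rideal); split; first by case: LLt.
  move=> c [Ac cI].
  have := cI z (ex_intro _ 1 (conj (subalg1 hA) (esym (mulr1 z)))).
  rewrite zL // => /eqP; rewrite scaler_eq0 (negbTE z0) orbF => /eqP muc.
  by case: LLt => _ ->; rewrite // muc scale0r.
by move: muLt; rewrite Ltzb mult_funM // muz mul0r eqxx.
Qed.

Lemma Lmu_line x : Lmu A mu x -> x = (mu x / mu Lt) *: Lt.
Proof.
move=> Lx; have [Ax _] := Lx; have [ALt _] := LLt.
apply/eqP; rewrite -subr_eq0; apply/eqP; apply: Lmu_mu0.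
  split; first by apply: subalgB => //; exact: subalgZ.
  move=> a Aa; have [_ xL] := Lx; have [_ LtL] := LLt.
  by rewrite mulrBr -scalerAr xL // LtL // scalerBr !scalerA mulrC.
by rewrite mult_funB ?mult_funZ ?divfK // ?subrr //; exact: subalgZ.
Qed.

(* Lt is also a right eigenvector: Lt a is a left eigenvector with
   mu (Lt a) = mu Lt mu a. *)
Lemma Lmu_Rmu : Rmu A mu Lt.
Proof.
have [ALt LtL] := LLt; split => // a Aa.
have LLta : Lmu A mu (Lt * a).
  split; first exact: subalgM.
  by move=> b Ab; rewrite mulrA LtL // -scalerAl.
by rewrite (Lmu_line LLta) mult_funM // mulrAC divff // mul1r.
Qed.

(* Every right eigenvector x is proportional to Lt: x Lt = mu Lt x = mu x Lt. *)
Lemma Rmu_line x : Rmu A mu x -> x = (mu x / mu Lt) *: Lt.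
Proof.
move=> [Ax xR]; have [ALt LtL] := LLt.
have e : mu Lt *: x = mu x *: Lt by rewrite -xR // LtL.
by apply: (scalerI muLt); rewrite e scalerA mulrCA mulfV // mulr1.
Qed.

Lemma eigenvectors_line x :
  (Lmu A mu x <-> Rmu A mu x) /\ (Lmu A mu x <-> exists c : k, x = c *: Lt).
Proof.
split; split.
- by move=> /Lmu_line ->; apply: Rmu_scale; exact: Lmu_Rmu.
- by move=> /Rmu_line ->; exact: Lmu_scale.
- by move=> /Lmu_line ->; eexists.
- by move=> [c ->]; exact: Lmu_scale.
Qed.

End NonDegenerateMu.
End EigenvectorUniqueness.

Unset Implicit Arguments.

Theorem mainTheorem10 (k : fieldType) (H : algType k)
  (D : H -> seq (H * H)) (e : H -> k) (S : H -> H)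
  (hH : is_hopf D e S)
  (A : H -> Prop) (hA : left_coideal_subalg D A) (hbi : biannihilator A)
  (mu : H -> k) (hmu : mult_fun A mu) (hmu0 : exists a, A a /\ mu a <> 0) :
  (forall Lt : H, Lmu A mu Lt -> Lt <> 0 -> nondeg D A Lt -> mu Lt <> 0 ->
     forall x, (Lmu A mu x <-> Rmu A mu x) /\
               (Lmu A mu x <-> exists c : k, x = c *: Lt)) /\
  (forall Lh : H, Lmu A mu Lh -> Lh <> 0 ->
     (forall x, Lmu A mu x <-> exists c : k, x = c *: Lh) ->
     nondeg D A Lh) /\
  (frobenius A -> forall L : H, Lmu A mu L -> L <> 0 -> nondeg D A L).
Proof.
have [lbiann rbiann] := hbi.
have nondeg_all L : Lmu A mu L -> L <> 0 -> nondeg D A L.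
  by move=> LL /eqP L0; exact: (Lmu_nondeg hH hA lbiann LL L0).
split; [|split].
- move=> Lt LLt _ _ /eqP muLt x.
  exact: (eigenvectors_line (proj1 hA) hmu rbiann LLt muLt x).
- by move=> Lh LLh Lh0 _; exact: nondeg_all.
- by move=> _; exact: nondeg_all.
Qed.
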